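(* Let $X$ be a separable metric space endowed with the universal $\sigma$-algebra $\mathscr U(X)$, and let $\mathbb P$ be the completion of a Borel probability measure on $X$ restricted to $\mathscr U(X)$. Assume that $\mathbb P_n$ converges weakly to $\mathbb Q$ (the completion of a Borel measure restricted to $\mathscr U(X)$), where $\mathbb P_n(E)=\mathbb P(E\cap A_n)$ for a sequence of sets $A_n\in\mathscr U(X)$. Then for every measurable set $E\in\mathscr U(X)$, $\lim_{n\to\infty}\mathbb P_n(E)=\mathbb Q(E)$.
   Context: $\mathscr U(X)$ is the intersection over all $\sigma$-finite Borel measures $\nu$ on $X$ of the $\nu$-completion $\sigma$-algebras. Weak convergence means $\int f\,d\mathbb P_n\to\int f\,d\mathbb Q$ for all bounded continuous $f$. *)

From HB Require Import structures.
From mathcomp Require Import all_boot all_order all_algebra.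
From mathcomp Require Import all_classical all_reals all_analysis.
Set Implicit Arguments. Unset Strict Implicit. Unset Printing Implicit Defensive.
Import Order.TTheory GRing.Theory Num.Theory numFieldTopology.Exports.
Local Open Scope classical_set_scope.
Local Open Scope ring_scope.

(* Metric spaces with a distinguished point (needed to build measurable
   types in mathcomp-analysis; harmless since a probability measure lives
   on a nonempty space). *)
#[short(type="pmetricType")]
HB.structure Definition PointedMetric (K : numDomainType) :=
  { M of Pointed M & Metric K M }.

Definition separable (T : topologicalType) :=
  exists D : set T, countable D /\ dense D.

Definition borel_t (T : ptopologicalType) := g_sigma_algebraType (@open T).

Definition completed_sets (R : realType) (T : ptopologicalType)
  (nu : set (borel_t T) -> \bar R) : set (set T) :=
  [set A | exists B N, [/\ measurable (B : set (borel_t T)),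
                          nu.-negligible (N : set (borel_t T)) & A = B `|` N]].

Definition universal_sets (R : realType) (T : ptopologicalType) : set (set T) :=
  [set A | forall nu : {measure set (borel_t T) -> \bar R},
      sigma_finite setT nu -> completed_sets nu A].

Definition univ_t (R : realType) (T : ptopologicalType) :=
  g_sigma_algebraType (@universal_sets R T).

Definition is_completion_of (R : realType) (T : ptopologicalType)
  (mu : set (borel_t T) -> \bar R) (P : set (univ_t R T) -> \bar R) :=
  forall (B N : set T), measurable (B : set (borel_t T)) ->
    mu.-negligible (N : set (borel_t T)) ->
    measurable (B `|` N : set (univ_t R T)) -> P (B `|` N) = mu B.

(* Urysohn functions separating a closed set F from the complements of its
   1/(k+1)-thickenings turn weak convergence into the portmanteau bounds
   limsup P_n(F) <= Q(F) for closed F and liminf P_n(V) >= Q(V) for open V.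
   Since P_n <= P and the finite Borel measure P is regular (every Borel set S
   lies between a closed F and an open V with P(V \ F) small), these bounds
   force P_n(S) -> Q(S) for Borel S.  A universally measurable E belongs to the
   completion of the probability underlying P, so it lies between Borel sets
   B <= E <= C with P(C \ B) = 0; then P_n and, in the limit, Q vanish on
   C \ B, whence P_n(E) = P_n(B) -> Q(B) = Q(E). *)

From HB Require Import structures.
From mathcomp Require Import all_boot all_order all_algebra.
From mathcomp Require Import all_classical all_reals all_analysis.
From mathcomp Require Import lra measurable_realfun.
Import Order.TTheory GRing.Theory Num.Theory numFieldTopology.Exports.
Set Implicit Arguments.
Unset Strict Implicit.
Unset Printing Implicit Defensive.
Local Open Scope classical_set_scope.
Local Open Scope ring_scope.

Section universally_measurable.
Context (R : realType) (T : ptopologicalType).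
Local Notation BT := (borel_t T).
Local Notation UT := (univ_t R T).

Lemma borel_measurable_univ (S : set T) :
  measurable (S : set BT) -> measurable (S : set UT).
Proof.
move=> mS; apply: sub_sigma_algebra => nu _.
by exists S, set0; rewrite setU0; split => //; exact: negligible_set0.
Qed.

Lemma open_measurable_univ (S : set T) : open S -> measurable (S : set UT).
Proof.
by move=> oS; apply: borel_measurable_univ; exact: sub_sigma_algebra.
Qed.

Lemma closed_measurable_univ (S : set T) : closed S -> measurable (S : set UT).
Proof.
move=> cS; rewrite -[S]setCK; apply: measurableC.
by apply: open_measurable_univ; exact: closed_openC.
Qed.

Lemma continuous_measurable_univ (f : T -> R) :
  continuous f -> measurable_fun [set: UT] f.
Proof.
move=> /continuousP cf.
apply: (measurability _ (RGenOpens.measurableE R)).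
move=> _ [_ [a [b ->] <-]]; rewrite setTI.
by apply: open_measurable_univ; apply: cf; exact: interval_open.
Qed.

End universally_measurable.

Section thickening.
Context (R : realType) (T : pseudoMetricType R).

(* Interiors, because balls of a general pseudometric need not be open. *)
Definition thicken (F : set T) (k : nat) : set T :=
  \bigcup_(a in F) interior (ball a k.+1%:R^-1).

Lemma open_thicken F k : open (thicken F k).
Proof. by apply: bigcup_open => a _; exact: open_interior. Qed.

Lemma sub_thicken F k : F `<=` thicken F k.
Proof. by move=> a Fa; exists a => //; exact: nbhsx_ballx. Qed.

Lemma nonincreasing_thicken F : nonincreasing_seq (thicken F).
Proof.
move=> k m km; apply/subsetPset => x [a Fa ax]; exists a => //; move: ax.
by apply/interiorS/le_ball; rewrite lef_pV2 ?posrE // ler_nat ltnS.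
Qed.

Lemma bigcap_thicken F : closed F -> \bigcap_k thicken F k = F.
Proof.
move=> cF; apply/seteqP; split => [x Fx|x Fx k _]; last exact: sub_thicken.
rewrite (closure_id F).1 // => B /nbhs_ballP [r r0 rB].
have [k _ kr] := near_infty_natSinv_lt (PosNum r0).
have [a Fa /interior_subset ax] := Fx k I.
by exists a; split => //; apply/rB/(le_ball (ltW (kr k (leqnn k))))/ball_sym.
Qed.

Lemma urysohn_thicken (F : set T) k : closed F -> exists f : T -> R,
  [/\ continuous f, (forall x, 0 <= f x <= 1), (forall x, F x -> f x = 1) &
      (forall x, ~ thicken F k x -> f x = 0)].
Proof.
move=> cF; have disj : ~` thicken F k `&` F = set0.
  by apply/disjoints_subset => x nx Fx; apply/nx/sub_thicken.
have [f [cf f0 f1 f01]] := @urysohn_ext_itv T R pseudometric_normal _ _ _ _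
  (open_closedC (open_thicken F k)) cF disj ltr01.
exists f; split => // [x|x Fx|x nx].
- by have := f01 _ (imageT f x); rewrite /= in_itv.
- exact: f1 (imageP f Fx).
- exact: f0 (imageP f nx).
Qed.

End thickening.

Section extended_real_sequences.
Context (R : realType).
Local Open Scope ereal_scope.
Implicit Types (u : (\bar R)^nat) (l b : \bar R).

Lemma cvge_lt_near u l b :
  u @ \oo --> l -> l < b -> \forall n \near \oo, u n < b.
Proof. by move=> ul lb; exact: ul _ (open_ereal_lt' lb). Qed.

Lemma cvge_gt_near u l b :
  u @ \oo --> l -> b < l -> \forall n \near \oo, b < u n.
Proof. by move=> ul bl; exact: ul _ (open_ereal_gt' bl). Qed.

Lemma cvge_lt_ex u l b : u @ \oo --> l -> l < b -> exists n, u n < b.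
Proof.
by move=> ul lb; have [n _ /(_ n (leqnn n))] := cvge_lt_near ul lb; exists n.
Qed.

Lemma cvge_approx u (l : R) :
  (forall e : R, (0 < e)%R -> \forall n \near \oo,
     (l - e)%:E <= u n <= (l + e)%:E) -> u @ \oo --> l%:E.
Proof.
move=> ul; have ufin : \forall n \near \oo, u n \is a fin_num.
  apply: filterS (ul 1%R ltr01) => n /andP[h1 h2].
  by rewrite fin_numElt (lt_le_trans _ h1) ?ltNyr // (le_lt_trans h2) ?ltry.
apply/fine_cvgP; split => //; apply/cvgrPdist_le => e e0.
apply: filterS2 ufin (ul e e0) => n ufn.
rewrite -(fineK ufn) !lee_fin ler_distl /= => /andP[h1 h2].
by apply/andP; split; lra.
Qed.

End extended_real_sequences.

Section measure_lemmas.
Context d (X : measurableType d) (R : realType) (m : {measure set X -> \bar R}).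
Local Open Scope ereal_scope.

Lemma nonincreasing_cvg_mu0 (D : (set X)^nat) : m (D 0%N) < +oo ->
  (forall n, measurable (D n)) -> nonincreasing_seq D -> \bigcap_n D n = set0 ->
  m (D n) @[n --> \oo] --> 0.
Proof.
move=> mD0 mD ndD D0; rewrite -(measure0 m) -D0.
by apply: nonincreasing_cvg_mu => //; rewrite D0.
Qed.

Lemma measure_fin_num (A : set X) :
  m [set: X] < +oo -> measurable A -> m A \is a fin_num.
Proof.
move=> mT mA; rewrite ge0_fin_numE //; apply: le_lt_trans mT.
by apply: le_measure; rewrite ?inE.
Qed.

Lemma measure_setDUK (A B : set X) : measurable A -> measurable B -> A `<=` B ->
  m B = m A + m (B `\` A).
Proof.
move=> mA mB AB; rewrite -[in LHS](setDUK AB) measureU //.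
  exact: measurableD.
by rewrite setDIK.
Qed.

Lemma measure_sandwich (B E C : set X) : measurable B -> measurable E ->
  measurable C -> B `<=` E -> E `<=` C -> m (C `\` B) = 0 -> m E = m B.
Proof.
move=> mB mE mC BE EC CB0; apply/eqP.
rewrite eq_le (le_measure _ (mem_set mB) (mem_set mE) BE) andbT.
rewrite -[m B]adde0 -CB0 -measure_setDUK //; last exact: subset_trans EC.
by apply: le_measure; rewrite ?inE.
Qed.

Lemma integral_one : \int[m]_x 1 = m [set: X].
Proof. by rewrite integral_cst // mul1e. Qed.

Lemma bigcup_bigsetU_approx (F : (set X)^nat) (e : R) : m [set: X] < +oo ->
  (forall k, measurable (F k)) -> (0 < e)%R ->
  exists K, m (\bigcup_k F k `\` \big[setU/set0]_(k < K) F k) < e%:E.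
Proof.
move=> mT mF e0; have mG K : measurable (\big[setU/set0]_(k < K) F k).
  by apply: bigsetU_measurable => k _.
suff D0 : m (\bigcup_k F k `\` \big[setU/set0]_(k < K) F k) @[K --> \oo] --> 0.
  by apply: cvge_lt_ex D0 _; rewrite lte_fin.
apply: nonincreasing_cvg_mu0.
- apply: le_lt_trans mT; apply: le_measure; rewrite ?inE //.
  exact: measurableD (bigcupT_measurable _ mF) (mG _).
- by move=> K; exact: measurableD (bigcupT_measurable _ mF) (mG _).
- by move=> i j ij; apply/subsetPset; apply: setDS; exact: subset_bigsetU.
- apply/seteqP; split => // x Dx; have [[k _ Fkx] _] := Dx 0%N I.
  by have [_] := Dx k.+1 I; apply; exact: bigsetU_sup Fkx.
Qed.

Lemma measure_bigcup_setD_le (F V : (set X)^nat) (G : set X) :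
  (forall k, measurable (F k)) -> (forall k, measurable (V k)) -> measurable G ->
  m (\bigcup_k V k `\` G) <=
    m (\bigcup_k F k `\` G) + \sum_(k <oo) m (V k `\` F k).
Proof.
move=> mF mV mG; have mVF k : measurable (V k `\` F k) by exact: measurableD.
have mFG : measurable (\bigcup_k F k `\` G).
  by apply: measurableD => //; exact: bigcupT_measurable.
have mVG : measurable (\bigcup_k V k `\` G).
  by apply: measurableD => //; exact: bigcupT_measurable.
have mVFs := bigcupT_measurable _ mVF.
have cover : \bigcup_k V k `\` G `<=`
    (\bigcup_k F k `\` G) `|` \bigcup_k (V k `\` F k).
  move=> x [[k _ Vkx] nGx]; have [Fkx|nFkx] := pselect (F k x).
    by left; split => //; exists k.
  by right; exists k.
have mcover := measurableU _ _ mFG mVFs.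
apply: le_trans (le_measure _ (mem_set mVG) (mem_set mcover) cover) _.
apply: le_trans (measureU2 _ mFG mVFs) _; apply: leeD2l.
exact: measure_sigma_subadditive mVF mVFs (@subset_refl _ _).
Qed.

Lemma measure_le_integral (F : set X) (f : X -> R) :
  measurable F -> measurable_fun [set: X] f -> (forall x, (0 <= f x <= 1)%R) ->
  (forall x, F x -> f x = 1%R) -> m F <= \int[m]_x (f x)%:E.
Proof.
move=> mF mf f01 f1.
rewrite -[F]setIT -integral_indic //.
apply: ge0_le_integral => //.
- by apply/measurable_EFinP; exact: measurable_indic.
- exact/measurable_EFinP.
move=> x _; rewrite lee_fin indicE; have [/set_mem Fx|_] := boolP (x \in F).
  by rewrite f1.
by case/andP: (f01 x).
Qed.

Lemma integral_le_measure (V : set X) (f : X -> R) :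
  measurable V -> measurable_fun [set: X] f -> (forall x, (0 <= f x <= 1)%R) ->
  (forall x, ~ V x -> f x = 0%R) -> \int[m]_x (f x)%:E <= m V.
Proof.
move=> mV mf f01 f0.
rewrite -[V]setIT -integral_indic //.
apply: ge0_le_integral => //.
- by move=> x _; rewrite lee_fin; case/andP: (f01 x).
- exact/measurable_EFinP.
- by apply/measurable_EFinP; exact: measurable_indic.
move=> x _; rewrite lee_fin indicE; have [_|/negP Vx] := boolP (x \in V).
  by case/andP: (f01 x).
by rewrite f0 // => /mem_set.
Qed.

End measure_lemmas.

Section weak_convergence.
Context (R : realType) (T : pmetricType R).
Local Notation UT := (univ_t R T).

Definition weak_cvg (m : nat -> {measure set UT -> \bar R})
    (Q : {measure set UT -> \bar R}) :=
  forall f : T -> R, continuous f -> (exists M : R, forall x, `|f x| <= M) ->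
    (\int[m n]_x (f x)%:E)%E @[n --> \oo] --> (\int[Q]_x (f x)%:E)%E.

Local Open Scope ereal_scope.

Lemma thickenD_cvg_mu0 (m : {measure set UT -> \bar R}) (F : set T) :
  m [set: UT] < +oo -> closed F -> m (thicken F k `\` F) @[k --> \oo] --> 0.
Proof.
move=> mT cF; apply: nonincreasing_cvg_mu0.
- apply: le_lt_trans mT; apply: le_measure; rewrite ?inE //.
  by apply: measurableD; [exact: open_measurable_univ (open_thicken _ _)|
                          exact: closed_measurable_univ].
- move=> k; apply: measurableD; last exact: closed_measurable_univ.
  exact: open_measurable_univ (open_thicken _ _).
- move=> i j ij; apply/subsetPset; apply: setSD.
  exact/subsetPset/nonincreasing_thicken.
- apply/seteqP; split => // x Dx; have [_] := Dx 0%N I; apply.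
  by rewrite -(bigcap_thicken cF) => k _; have [] := Dx k I.
Qed.

Context (m : nat -> {measure set UT -> \bar R})
  (Q : {measure set UT -> \bar R}).
Hypotheses (mQ : weak_cvg m Q) (QT : Q [set: UT] < +oo).

Lemma weak_cvg_setT : m n [set: UT] @[n --> \oo] --> Q [set: UT].
Proof.
have bd1 : exists M : R, forall x : T, (`|cst 1 x| <= M)%R.
  by exists 1%R => x; rewrite normr1.
have := mQ (@cst_continuous _ _ (1%R : R)) bd1.
by rewrite integral_one; under eq_fun do rewrite integral_one.
Qed.

Lemma weak_cvg_closed (F : set T) (e : R) : closed F -> (0 < e)%R ->
  \forall n \near \oo, m n F < Q F + e%:E.
Proof.
move=> cF e0; have e20 : (0 < e / 2)%R by rewrite divr_gt0.
have mF : measurable (F : set UT) := closed_measurable_univ cF.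
have [k QkF] : exists k, Q (thicken F k `\` F) < (e / 2)%:E.
  by apply: cvge_lt_ex (thickenD_cvg_mu0 QT cF) _; rewrite lte_fin.
have mFk : measurable (thicken F k : set UT).
  exact: open_measurable_univ (open_thicken _ _).
have [f [cf f01 f1 f0]] := urysohn_thicken k cF.
have mf := continuous_measurable_univ cf.
have intQ : \int[Q]_x (f x)%:E <= Q F + (e / 2)%:E.
  apply: le_trans (integral_le_measure Q mFk mf f01 f0) _.
  by rewrite (measure_setDUK Q mF mFk (sub_thicken k)) leeD2l // ltW.
have intQfin : \int[Q]_x (f x)%:E \is a fin_num.
  rewrite ge0_fin_numE; last by apply: integral_ge0 => x _; case/andP: (f01 x).
  apply: le_lt_trans intQ _; rewrite lte_add_pinfty ?ltry // -ge0_fin_numE //.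
  exact: measure_fin_num.
have fbd : exists M : R, forall x, (`|f x| <= M)%R.
  by exists 1%R => x; have /andP[f0x f1x] := f01 x; rewrite ger0_norm.
have ltQ : \int[Q]_x (f x)%:E < \int[Q]_x (f x)%:E + (e / 2)%:E.
  by rewrite lteDl.
apply: filterS (cvge_lt_near (mQ cf fbd) ltQ) => n intm.
apply: le_lt_trans (measure_le_integral (m n) mF mf f01 f1) _.
apply: lt_le_trans intm _; apply: le_trans (leeD2r _ intQ) _.
by rewrite -addeA -EFinD -splitr.
Qed.

Lemma weak_cvg_open (V : set T) (e : R) : open V -> (0 < e)%R ->
  \forall n \near \oo, Q V - e%:E < m n V.
Proof.
move=> oV e0; have e20 : (0 < e / 2)%R by rewrite divr_gt0.
have cC : closed (~` V) by exact: open_closedC.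
have mC : measurable (~` V : set UT) := closed_measurable_univ cC.
have mV : measurable (V : set UT) := open_measurable_univ oV.
have VT : V `<=` [set: UT] by [].
have Qfin A : measurable A -> Q A \is a fin_num by exact: measure_fin_num.
have near_T : \forall n \near \oo, Q [set: UT] - (e / 2)%:E < m n [set: UT].
  by apply: cvge_gt_near weak_cvg_setT _; rewrite gte_subl ?Qfin.
have := cvge_lt_near weak_cvg_setT QT.
have := weak_cvg_closed cC e20.
apply: filterS3 near_T => n h1 h2 mT.
have mfin A : measurable A -> m n A \is a fin_num by exact: measure_fin_num.
move: h1 h2; rewrite !(measure_setDUK _ mV measurableT VT) setTD.
rewrite -(fineK (Qfin _ mV)) -(fineK (Qfin _ mC)) -(fineK (mfin _ mV)).
rewrite -[m n (~` V)](fineK (mfin _ mC)) -!EFinD !lte_fin; lra.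
Qed.

End weak_convergence.

Section regularity.
Context (R : realType) (T : pmetricType R).
Context (P : {measure set (univ_t R T) -> \bar R}).
Local Notation BT := (borel_t T).
Local Notation UT := (univ_t R T).
Hypothesis PT : (P [set: UT] < +oo)%E.

Definition regular_set (S : set T) := forall e : R, 0 < e ->
  exists F V : set T,
    [/\ closed F, open V, F `<=` S, S `<=` V & (P (V `\` F) <= e%:E)%E].

Lemma regular_setC (S : set T) : regular_set S -> regular_set (~` S).
Proof.
move=> rS e e0; have [F [V [cF oV FS SV PVF]]] := rS e e0.
exists (~` V), (~` F); split; [exact: open_closedC|exact: closed_openC|
  exact: subsetC|exact: subsetC|].
by rewrite setDE setCK setIC -setDE.
Qed.

Lemma regular_setT : regular_set [set: T].
Proof.
move=> e e0; exists setT, setT.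
split; [exact: closedT|exact: openT|by []|by []|].
by rewrite setDv measure0 lee_fin ltW.
Qed.

Lemma regular_closed (F : set T) : closed F -> regular_set F.
Proof.
move=> cF e e0; have [k PkF] : exists k, (P (thicken F k `\` F) < e%:E)%E.
  by apply: cvge_lt_ex (thickenD_cvg_mu0 PT cF) _; rewrite lte_fin.
exists F, (thicken F k); split => //; [exact: open_thicken|exact: sub_thicken|].
exact: ltW.
Qed.

Lemma regular_open (V : set T) : open V -> regular_set V.
Proof.
move=> oV; rewrite -[V]setCK; apply: regular_setC; apply: regular_closed.
exact: open_closedC.
Qed.

Lemma regular_bigcup (S : (set T)^nat) :
  (forall k, measurable (S k : set UT)) ->
  (forall k, regular_set (S k)) -> regular_set (\bigcup_k S k).
Proof.
move=> mS rS e e0; have e20 : 0 < e / 2 by rewrite divr_gt0.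
pose eps k := e / 2 / (2 ^ k.+1)%:R.
have /choice[F /choice[V hFV]] : forall k, exists F V, [/\ closed F, open V,
    F `<=` S k, S k `<=` V & (P (V `\` F) <= (eps k)%:E)%E].
  by move=> k; apply: rS; rewrite divr_gt0 // ltr0n expn_gt0.
have cF k : closed (F k) by case: (hFV k).
have mF k : measurable (F k : set UT) by exact: closed_measurable_univ.
have mV k : measurable (V k : set UT).
  by apply: open_measurable_univ; case: (hFV k).
have [K PK] := bigcup_bigsetU_approx PT mF e20.
exists (\big[setU/set0]_(k < K) F k), (\bigcup_k V k); split.
- by apply: closed_bigsetU => k _.
- by apply: bigcup_open => k _; case: (hFV k).
- rewrite -bigcup_mkord => x [k _ Fkx]; exists k => //.
  by case: (hFV k) => _ _ + _ _; apply.
- by move=> x [k _ Skx]; exists k => //; case: (hFV k) => _ _ _ + _; apply.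
have mG : measurable (\big[setU/set0]_(k < K) F k : set UT).
  by apply: bigsetU_measurable => k _.
apply: le_trans (measure_bigcup_setD_le P mF mV mG) _.
rewrite [e]splitr EFinD; apply: leeD; first exact: ltW.
apply: le_trans (epsilon_trick0 xpredT (ltW e20)).
by apply: lee_nneseries => // k _; case: (hFV k).
Qed.

Lemma regular_borel (S : set T) : measurable (S : set BT) -> regular_set S.
Proof.
move=> mS; apply: (@dynkin_induction _ BT (@open T)) mS => //.
- exact: openI.
- exact: regular_setT.
- exact: regular_open.
- by move=> A _; exact: regular_setC.
- move=> F mF _ rF; apply: regular_bigcup => // k.
  exact: borel_measurable_univ.
Qed.

End regularity.

Section null_sandwich.
Context (R : realType) (T : ptopologicalType).
Context (P : {measure set (univ_t R T) -> \bar R}).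
Local Notation BT := (borel_t T).
Local Notation UT := (univ_t R T).

Definition null_sandwiched (E : set T) := exists B C : set T,
  [/\ measurable (B : set BT), measurable (C : set BT), B `<=` E, E `<=` C &
      P (C `\` B) = 0%E].

Lemma sigma_algebra_null_sandwiched : sigma_algebra setT null_sandwiched.
Proof.
split.
- by exists set0, set0; split => //; rewrite setDv measure0.
- move=> E [B [C [mB mC BE EC PCB]]]; rewrite setTD; exists (~` C), (~` B).
  split; [exact: measurableC|exact: measurableC|
    exact: subsetC EC|exact: subsetC BE|].
  by rewrite setDE setCK setIC -setDE.
move=> E /choice[B /choice[C hBC]].
have mB k : measurable (B k : set BT) by case: (hBC k).
have mC k : measurable (C k : set BT) by case: (hBC k).
have mCB k : measurable (C k `\` B k : set UT).
  by apply: borel_measurable_univ; exact: measurableD.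
exists (\bigcup_k B k), (\bigcup_k C k); split.
- exact: bigcupT_measurable.
- exact: bigcupT_measurable.
- by move=> x [k _ Bkx]; exists k => //; case: (hBC k) => _ _ + _ _; apply.
- by move=> x [k _ Ekx]; exists k => //; case: (hBC k) => _ _ _ + _; apply.
have cover : \bigcup_k C k `\` \bigcup_k B k `<=` \bigcup_k (C k `\` B k).
  move=> x [[k _ Ckx] nBx]; exists k => //; split => // Bkx.
  by apply: nBx; exists k.
apply/eqP; rewrite eq_le measure_ge0 andbT.
apply: le_trans (measure_sigma_subadditive P mCB _ cover) _.
  apply: borel_measurable_univ; apply: measurableD; exact: bigcupT_measurable.
by rewrite eseries0 // => k _ _; case: (hBC k).
Qed.

Lemma universal_null_sandwiched (mu : {measure set BT -> \bar R}) :
  sigma_finite setT mu -> is_completion_of mu P ->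
  @universal_sets R T `<=` null_sandwiched.
Proof.
move=> mu_fin hP E /(_ mu mu_fin)[B [N [mB [M [mM muM NM]] ->]]].
have PM : P M = 0%E.
  rewrite -muM -(hP M set0) ?setU0 //; first exact: negligible_set0.
  exact: borel_measurable_univ.
exists B, (B `|` M); split => //; first exact: measurableU.
- by move=> x [Bx|Nx]; [left|right; exact: NM].
apply/eqP; rewrite eq_le measure_ge0 andbT -PM.
apply: le_measure; rewrite ?inE; last by move=> x [[]].
- by apply: borel_measurable_univ; apply: measurableD => //; exact: measurableU.
- exact: borel_measurable_univ.
Qed.

Lemma measurable_univ_null_sandwiched (mu : {measure set BT -> \bar R})
    (E : set UT) :
  sigma_finite setT mu -> is_completion_of mu P -> measurable E ->
  null_sandwiched E.
Proof.
move=> mu_fin hP; apply: (smallest_sub sigma_algebra_null_sandwiched).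
exact: universal_null_sandwiched mu_fin hP.
Qed.

End null_sandwich.

Section dominated_weak_convergence.
Context (R : realType) (T : pmetricType R).
Local Notation BT := (borel_t T).
Local Notation UT := (univ_t R T).
Context (P : {measure set UT -> \bar R}) (m : nat -> {measure set UT -> \bar R})
  (Q : {measure set UT -> \bar R}).
Local Open Scope ereal_scope.
Hypotheses (PT : P [set: UT] < +oo) (QT : Q [set: UT] < +oo).
Hypothesis mQ : weak_cvg m Q.
Hypothesis mP : forall n A, measurable A -> m n A <= P A.

Lemma weak_cvg_borel (S : set T) :
  measurable (S : set BT) -> m n S @[n --> \oo] --> Q S.
Proof.
move=> mS; have mSU : measurable (S : set UT) := borel_measurable_univ mS.
have QSfin := measure_fin_num QT mSU.
rewrite -(fineK QSfin); apply: cvge_approx => e e0.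
have e20 : (0 < e / 2)%R by rewrite divr_gt0.
have e_half : e%:E = (e / 2)%:E + (e / 2)%:E by rewrite -EFinD -splitr.
have [F [V [cF oV FS SV PVF]]] := regular_borel PT mS e20.
have mF : measurable (F : set UT) := closed_measurable_univ cF.
have mV : measurable (V : set UT) := open_measurable_univ oV.
have mVF : measurable (V `\` F : set UT) by exact: measurableD.
have m_small n (A : set UT) :
    measurable A -> A `<=` V `\` F -> m n A <= (e / 2)%:E.
  move=> mA AVF; apply: le_trans (mP n mA) (le_trans _ PVF).
  by apply: le_measure; rewrite ?inE.
apply: filterS2 (weak_cvg_closed mQ QT cF e20) (weak_cvg_open mQ QT oV e20).
move=> n hF hV; apply/andP; split.
- rewrite EFinB fineK // leeBlDr //.
  apply: le_trans (le_measure Q (mem_set mSU) (mem_set mV) SV) _.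
  move: hV; rewrite lteBlDr // => /ltW/le_trans; apply.
  rewrite (measure_setDUK (m n) mSU mV SV) e_half addeA leeD2r // leeD2l //.
  by apply: m_small; [exact: measurableD|exact: setDS].
- rewrite EFinD fineK // (measure_setDUK (m n) mF mSU FS) e_half addeA.
  have mSF : m n (S `\` F) <= (e / 2)%:E.
    by apply: m_small; [exact: measurableD|exact: setSD].
  apply: le_trans (leeD2l _ mSF) (le_trans (leeD2r _ (ltW hF)) _).
  by rewrite leeD2r // leeD2r // le_measure ?inE.
Qed.

Lemma weak_cvg_null_sandwiched (E : set T) : measurable (E : set UT) ->
  null_sandwiched P E -> m n E @[n --> \oo] --> Q E.
Proof.
move=> mE [B [C [mB mC BE EC PCB]]].
have mBU : measurable (B : set UT) := borel_measurable_univ mB.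
have mCU : measurable (C : set UT) := borel_measurable_univ mC.
have mCB : measurable (C `\` B : set BT) by exact: measurableD.
have mCB0 n : m n (C `\` B) = 0.
  apply/eqP; rewrite eq_le measure_ge0 andbT -PCB mP //.
  exact: borel_measurable_univ.
have QCB0 : Q (C `\` B) = 0.
  apply/eqP; rewrite eq_le measure_ge0 andbT.
  by apply: cvge_to_le (weak_cvg_borel mCB) _; apply: nearW => n; rewrite mCB0.
rewrite (measure_sandwich mBU mE mCU BE EC QCB0).
under eq_fun do rewrite (measure_sandwich mBU mE mCU BE EC (mCB0 _)).
exact: weak_cvg_borel.
Qed.

End dominated_weak_convergence.

Theorem lemma11 (R : realType) (T : pmetricType R)
  (hsep : separable T)
  (mu : probability (borel_t T) R)
  (P : {measure set (univ_t R T) -> \bar R})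
  (hP : is_completion_of mu P)
  (nuQ : {measure set (borel_t T) -> \bar R})
  (Q : {measure set (univ_t R T) -> \bar R})
  (hQ : is_completion_of nuQ Q)
  (A : nat -> set (univ_t R T)) (mA : forall n, measurable (A n))
  (hweak : forall f : T -> R, continuous f ->
     (exists M : R, forall x, `|f x| <= M) ->
     (\int[mrestr P (mA n)]_x (f x)%:E)%E @[n --> \oo] -->
       (\int[Q]_x (f x)%:E)%E) :
  forall E : set (univ_t R T), measurable E ->
    mrestr P (mA n) E @[n --> \oo] --> Q E.
Proof.
move=> E mE.
have PT : (P [set: univ_t R T] < +oo)%E.
  have := @hP setT set0 measurableT (negligible_set0 mu).
  by rewrite setU0 probability_setT => ->; rewrite ?ltry.
have dom n B : measurable B -> (mrestr P (mA n) B <= P B)%E.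
  by move=> mB; apply: le_measure; rewrite ?inE //; exact: measurableI.
have QT : (Q [set: univ_t R T] < +oo)%E.
  apply: le_lt_trans PT; apply: cvge_to_le (weak_cvg_setT hweak) _.
  by apply: nearW => n; exact: dom.
apply: (weak_cvg_null_sandwiched PT QT hweak dom mE).
exact: measurable_univ_null_sandwiched (sigma_finiteT mu) hP mE.
Qed.
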